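(* Let $a(z)=\sum_{i\ge0}a_iz^i$ and $b(z)=\sum_{i\ge0}b_iz^i$ be rational series in $\mathbb{R}[[z]]$ satisfying (P1), (P2$_d$) and (P3$_{d+1}$) for a positive integer $d$. If $a(z)/(1-z)\le b(z)/(1-z)$ coefficientwise, then $\lim_{z\to1}a(z)(1-z)^d\le\lim_{z\to1}b(z)(1-z)^d$.
   Context: A rational series is the power series expansion at $z=0$ of a rational function regular at $0$; limits are taken for the rational function. For power series, $\sum c_iz^i\le\sum e_iz^i$ means $c_i\le e_i$ for all $i$. (P1): the rational function has poles only at roots of unity. (P2$_m$): $z=1$ is a pole of order exactly $m$. (P3$_m$): every pole other than $z=1$ has order less than $m$. *)

From HB Require Import structures.
From mathcomp Require Import all_boot all_order all_algebra.
From mathcomp Require Import all_classical all_reals all_analysis.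
From mathcomp Require Import complex.
Set Implicit Arguments. Unset Strict Implicit. Unset Printing Implicit Defensive.
Import Order.TTheory GRing.Theory Num.Theory.
Local Open Scope ring_scope.

Section RationalSeries.
Variable R : realType.

Local Notation CR := (complex.complex R).
Definition toC (p : {poly R}) : {poly CR} :=
  map_poly (complex.real_complex_def (Phant R)) p.

(* The rational function p/q (q(0) <> 0) has power series expansion a at 0:
   q(z) * a(z) = p(z) as formal power series. *)
Definition is_rat_series (p q : {poly R}) (a : nat -> R) : Prop :=
  q.[0] != 0 /\ forall n : nat, \sum_(k < n.+1) q`_k * a (n - k)%N = p`_n.

(* Order of the pole of p/q at the complex point w (0 if w is not a pole).
   It is independent of the chosen representation p/q. *)
Definition pole_order (p q : {poly R}) (w : CR) : nat :=
  if p == 0 then 0%N else (mup w (toC q) - mup w (toC p))%N.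

Definition P1 (p q : {poly R}) : Prop :=
  forall w : CR, (0 < pole_order p q w)%N -> exists2 n : nat, (0 < n)%N & w ^+ n = 1.

Definition P2 (m : nat) (p q : {poly R}) : Prop := pole_order p q 1 = m.

Definition P3 (m : nat) (p q : {poly R}) : Prop :=
  forall w : CR, w != 1 -> (0 < pole_order p q w)%N -> (pole_order p q w < m)%N.

End RationalSeries.

(* All poles lie at roots of unity, so some H = (1 - X^N)^K turns H a and H b into
   polynomials U_a and U_b.  The partial sums c of b - a are nonnegative and satisfy
   H (1 - X) c = U_b - U_a; undoing the factors 1 - X^m one at a time shows that c
   grows polynomially, so for 0 < z < 1 the series of c converges at z and
   U_b(z) - U_a(z) = H(z) (1 - z) sum_n c_n z^n >= 0.  Hence a(z) <= b(z) on (0, 1);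
   multiplying by (1 - z)^d and letting z -> 1- compares the limits, which exist by
   (P2). *)

From HB Require Import structures.
From mathcomp Require Import all_boot all_order all_algebra.
From mathcomp Require Import all_classical all_reals all_analysis.
From mathcomp Require Import zify ring complex.
Import Order.TTheory GRing.Theory Num.Theory numFieldNormedType.Exports.
Local Open Scope classical_set_scope.
Local Open Scope ring_scope.
Set Implicit Arguments. Unset Strict Implicit. Unset Printing Implicit Defensive.

Section PolyConv.
Variable R : comNzRingType.
Implicit Types (p q : {poly R}) (a b : nat -> R).

Definition polyconv q a n : R := \sum_(k < n.+1) q`_k * a (n - k)%N.

Definition series_trunc a n : {poly R} := \poly_(i < n.+1) a i.

Lemma coefMr_eq_low p q q' i :
  (forall j, (j <= i)%N -> q`_j = q'`_j) -> (p * q)`_i = (p * q')`_i.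
Proof. by move=> qq'; rewrite !coefM; apply: eq_bigr => j _; rewrite qq' ?leq_subr. Qed.

Lemma coefM_series_trunc q a n m :
  (n <= m)%N -> (q * series_trunc a m)`_n = polyconv q a n.
Proof.
move=> nm; rewrite coefM; apply: eq_bigr => k _.
by rewrite coef_poly ltnS (leq_trans (leq_subr _ _) nm).
Qed.

Lemma eq_polyconv q a b : a =1 b -> polyconv q a =1 polyconv q b.
Proof. by move=> ab n; apply: eq_bigr => k _; rewrite ab. Qed.

Lemma polyconv_coef q p : polyconv q (nth 0 p) =1 nth 0 (q * p).
Proof.
move=> n; rewrite -(coefM_series_trunc _ _ (leqnn n)).
by apply: coefMr_eq_low => j jn; rewrite coef_poly ltnS jn.
Qed.

Lemma polyconvM p q a : polyconv (p * q) a =1 polyconv p (polyconv q a).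
Proof.
move=> n; rewrite -!(coefM_series_trunc _ _ (leqnn n)) -mulrA.
by apply: coefMr_eq_low => j jn; rewrite coef_poly ltnS jn coefM_series_trunc.
Qed.

Lemma polyconv1 a : polyconv 1 a =1 a.
Proof.
move=> n; rewrite /polyconv big_ord_recl coef1 mul1r subn0 big1 ?addr0 // => i _.
by rewrite coef1 mul0r.
Qed.

Lemma polyconvB q a b :
  polyconv q (fun i => a i - b i) =1 (fun n => polyconv q a n - polyconv q b n).
Proof. by move=> n; rewrite /polyconv -sumrB; apply: eq_bigr => k _; rewrite mulrBr. Qed.

Lemma polyconv_1subXn m a n : (0 < m)%N ->
  polyconv (1 - 'X^m) a n = a n - (if (m <= n)%N then a (n - m)%N else 0).
Proof.
move=> m_gt0; rewrite -(coefM_series_trunc _ _ (leqnn n)) mulrBl mul1r coefB.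
rewrite coefXnM coef_poly ltnSn ltnNge; case: leqP => //= mn.
by rewrite coef_poly ltnS leq_subr.
Qed.

Lemma polyconv_partial_sums a :
  polyconv (1 - 'X) (fun n => \sum_(i < n.+1) a i) =1 a.
Proof.
move=> n; have := polyconv_1subXn (fun n => \sum_(i < n.+1) a i) n (ltn0Sn 0).
rewrite expr1 => ->; case: n => [|n]; first by rewrite big_ord1 subr0.
by rewrite subn1 big_ord_recr addrAC subrr add0r.
Qed.

End PolyConv.

Lemma polyconv_inj (R : idomainType) (q : {poly R}) (a b : nat -> R) :
  q`_0 != 0 -> polyconv q a =1 polyconv q b -> a =1 b.
Proof.
move=> q0 ab n; elim/ltn_ind: n => n IH.
have := ab n; rewrite /polyconv !big_ord_recl !subn0.
rewrite (eq_bigr (fun i : 'I_n => q`_(bump 0 i) * b (n - bump 0 i)%N)).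
  by move/addIr/(mulfI q0).
by move=> i _; rewrite IH // lift0; have := ltn_ord i; lia.
Qed.

Lemma rat_series_polyconv (R : realType) (p q H : {poly R}) (a : nat -> R) :
  is_rat_series p q a -> q %| p * H -> polyconv H a =1 nth 0 (p * H %/ q).
Proof.
move=> [q0 qa] dvd_q; apply: (@polyconv_inj _ q); first by rewrite -horner_coef0.
move=> n; rewrite -polyconvM mulrC polyconvM (eq_polyconv _ qa) !polyconv_coef.
by rewrite [q * _]mulrC divpK // mulrC.
Qed.

Lemma leq_wexp2r m n e : (m <= n)%N -> (m ^ e <= n ^ e)%N.
Proof. by case: e => [|e] mn; rewrite ?expn0 ?leq_exp2r. Qed.

Section PolynomialGrowth.
Variable R : numDomainType.
Implicit Types (p q : {poly R}) (f g : nat -> R).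

Definition polynomially_bounded f :=
  exists B e, forall n, `|f n| <= B * (n.+1 ^ e)%:R.

Lemma eq_polynomially_bounded f g :
  f =1 g -> polynomially_bounded f -> polynomially_bounded g.
Proof. by move=> fg [B [e f_le]]; exists B, e => n; rewrite -fg. Qed.

Lemma normr_coef_le_sum p i : `|p`_i| <= \sum_(j < size p) `|p`_j|.
Proof.
have [ip|pi] := ltnP i (size p); last by rewrite nth_default // normr0 sumr_ge0.
by rewrite (bigD1 (Ordinal ip)) //= lerDl sumr_ge0.
Qed.

Lemma normr_coefM_le p q b i : (forall k, `|q`_k| <= b) ->
  `|(p * q)`_i| <= (\sum_(j < size p) `|p`_j|) * b.
Proof.
move=> q_le; have b_ge0 : 0 <= b by apply: le_trans (q_le 0%N).
rewrite -{1}[p]coefK poly_def mulr_suml coef_sum mulr_suml.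
apply: (le_trans (ler_norm_sum _ _ _)); apply: ler_sum => j _.
rewrite -scalerAl coefZ coefXnM normrM ler_wpM2l //.
by case: ifP => _; rewrite ?normr0.
Qed.

Lemma normr_horner_le p z : `|z| <= 1 -> `|p.[z]| <= \sum_(i < size p) `|p`_i|.
Proof.
move=> z_le1; rewrite horner_coef; apply: (le_trans (ler_norm_sum _ _ _)).
apply: ler_sum => i _; rewrite normrM normrX ler_piMr //.
by rewrite exprn_ile1.
Qed.

Lemma polynomially_bounded_coef p : polynomially_bounded (nth 0 p).
Proof.
by exists (\sum_(j < size p) `|p`_j|), 0%N => n; rewrite expn0 mulr1 normr_coef_le_sum.
Qed.

Lemma polynomially_bounded_1subXn m f : (0 < m)%N ->
  polynomially_bounded (polyconv (1 - 'X^m) f) -> polynomially_bounded f.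
Proof.
move=> m_gt0 [B [e g_le]]; exists B, e.+1.
have B_ge0 : 0 <= B by have := g_le 0%N; rewrite exp1n mulr1; apply: le_trans.
elim/ltn_ind => n IH.
rewrite -[f n](subrK (if (m <= n)%N then f (n - m)%N else 0)) -polyconv_1subXn //.
case: ifPn => [mn|_]; last first.
  by rewrite addr0 (le_trans (g_le n)) // ler_wpM2l // ler_nat expnS leq_pmull.
rewrite (le_trans (ler_normD _ _)) // (le_trans (lerD (g_le n) (IH (n - m)%N _))) //.
  by lia.
rewrite -mulrDr ler_wpM2l // -natrD ler_nat [leqRHS]expnS mulSn leq_add2l.
by rewrite expnS leq_mul ?leq_wexp2r //; lia.
Qed.

Lemma polynomially_bounded_1subXn_exp m K f : (0 < m)%N ->
  polynomially_bounded (polyconv ((1 - 'X^m) ^+ K) f) -> polynomially_bounded f.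
Proof.
move=> m_gt0; elim: K f => [|K IH] f.
  by apply: eq_polynomially_bounded => n; rewrite expr0 polyconv1.
move=> bdd; apply: (polynomially_bounded_1subXn m_gt0); apply: IH.
by apply: eq_polynomially_bounded bdd => n; rewrite exprSr polyconvM.
Qed.

End PolynomialGrowth.

Section PowerSeriesAtPoint.
Variable R : realType.

Lemma natr_mul_expr_le (y : R) n : 0 <= y < 1 -> n.+1%:R * y ^+ n <= (1 - y)^-1.
Proof.
move=> /andP[y_ge0 y_lt1]; have y1_gt0 : 0 < 1 - y by rewrite subr_gt0.
have le_sum : n.+1%:R * y ^+ n <= \sum_(i < n.+1) y ^+ i.
  rewrite mulr_natl -[n.+1 in X in X <= _]card_ord -sumr_const.
  by apply: ler_sum => i _; rewrite ler_wiXn2l // ?ltW // -ltnS.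
rewrite -(ler_pM2l y1_gt0) mulfV ?gt_eqF //.
apply: le_trans (ler_wpM2l (ltW y1_gt0) le_sum) _.
have -> : (1 - y) * \sum_(i < n.+1) y ^+ i = 1 - y ^+ n.+1.
  by rewrite -opprB mulNr -subrX1 opprB.
by rewrite gerBl exprn_ge0.
Qed.

Lemma cvg_natrX_expr e (z : R) : `|z| < 1 ->
  (fun n => (n.+1 ^ e)%:R * z ^+ n) @ \oo --> 0.
Proof.
elim: e z => [|e IH] z z_lt1.
  by under eq_fun do rewrite expn0 mul1r; exact: cvg_expr.
set y := Num.sqrt `|z|.
have y_ge0 : 0 <= y by rewrite sqrtr_ge0.
have y_lt1 : y < 1 by rewrite -sqrtr1 ltr_sqrt.
have yz : y ^+ 2 = `|z| by rewrite sqr_sqrtr.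
apply/norm_cvg0P; apply: (@squeeze_cvgr _ _ _ _ (cst 0)
  (fun n => (1 - y)^-1 * ((n.+1 ^ e)%:R * y ^+ n))); last 2 first.
- exact: cvg_cst.
- by rewrite -(mulr0 (1 - y)^-1); apply: cvgMl_tmp; apply: IH; rewrite ger0_norm.
near=> n; rewrite normr_ge0 /=.
have -> : `|(n.+1 ^ e.+1)%:R * z ^+ n| = (n.+1 ^ e)%:R * y ^+ n * (n.+1%:R * y ^+ n).
  by rewrite normrM normr_nat normrX -yz -exprM mulnC exprM expnSr natrM; ring.
rewrite [leRHS]mulrC ler_wpM2l ?mulr_ge0 ?exprn_ge0 //.
by apply: natr_mul_expr_le; rewrite y_ge0 y_lt1.
Unshelve. all: end_near.
Qed.

(* The remainder vanishes below degree [M.+1] and has at most [size G] further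
   coefficients, each controlled by the growth of [c] up to [M]. *)
Lemma horner_series_trunc_remainder_le (G U : {poly R}) (c : nat -> R) B e z M :
  polyconv G c =1 nth 0 U -> (forall n, `|c n| <= B * (n.+1 ^ e)%:R) ->
  `|z| <= 1 -> (size U <= M)%N ->
  `|(G * series_trunc c M - U).[z]|
    <= (size G)%:R * (\sum_(j < size G) `|G`_j|) * B * ((M.+1 ^ e)%:R * `|z| ^+ M).
Proof.
move=> GcU c_le z_le1 UM; set S := \sum_(j < size G) `|G`_j|.
have B_ge0 : 0 <= B by have := c_le 0%N; rewrite exp1n mulr1; apply: le_trans.
set W := G * series_trunc c M - U; set V := drop_poly M.+1 W.
have -> : W = V * 'X^(M.+1).
  rewrite -[LHS](poly_take_drop M.+1) [take_poly _ _](_ : _ = 0) ?add0r //.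
  apply/polyP => i; rewrite coef_take_poly coef0 coefB.
  by case: ltnP => // iM; rewrite coefM_series_trunc // GcU subrr.
have V_le i : `|V`_i| <= S * (B * (M.+1 ^ e)%:R).
  rewrite coef_drop_poly coefB (nth_default 0 (_ : size U <= i + M.+1)%N) ?subr0;
    last by lia.
  apply: normr_coefM_le => k; rewrite coef_poly.
  case: ifP => kM; last by rewrite normr0 mulr_ge0.
  by rewrite (le_trans (c_le k)) // ler_wpM2l // ler_nat leq_wexp2r.
have size_V : (size V <= size G)%N.
  rewrite size_drop_poly leq_subLR; apply: leq_trans (size_polyD _ _) _.
  rewrite size_polyN geq_max (leq_trans UM (leq_trans (leqnSn M) (leq_addr _ _))) andbT.
  apply: leq_trans (size_polyMleq _ _) _; apply: leq_trans (leq_pred _) _.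
  by rewrite addnC leq_add2r size_poly.
have sum_V : \sum_(i < size V) `|V`_i| <= (size G)%:R * (S * (B * (M.+1 ^ e)%:R)).
  apply: le_trans (_ : \sum_(i < size V) S * (B * (M.+1 ^ e)%:R) <= _).
    by apply: ler_sum => i _.
  rewrite sumr_const card_ord -[_ *+ size V]mulr_natl.
  apply: ler_wpM2r; last by rewrite ler_nat.
  exact: le_trans (V_le 0%N).
rewrite hornerM hornerXn normrM normrX.
apply: (@le_trans _ _ ((size G)%:R * (S * (B * (M.+1 ^ e)%:R)) * `|z| ^+ M)).
  apply: ler_pM => //; first exact: le_trans (normr_horner_le _ z_le1) sum_V.
  by rewrite ler_wiXn2l.
by rewrite !mulrA lexx.
Qed.

Lemma horner_series_trunc_cvg (G U : {poly R}) (c : nat -> R) z :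
  polyconv G c =1 nth 0 U -> polynomially_bounded c -> `|z| < 1 ->
  (fun M => G.[z] * (series_trunc c M).[z]) @ \oo --> U.[z].
Proof.
move=> GcU [B [e c_le]] z_lt1.
set C := (size G)%:R * (\sum_(j < size G) `|G`_j|) * B.
have remainder_cvg0 : (fun M => (G * series_trunc c M - U).[z]) @ \oo --> 0.
  apply/norm_cvg0P; apply: (@squeeze_cvgr _ _ _ _ (cst 0)
    (fun M => C * ((M.+1 ^ e)%:R * `|z| ^+ M))); last 2 first.
  - exact: cvg_cst.
  - by rewrite -(mulr0 C); apply: cvgMl_tmp; apply: cvg_natrX_expr; rewrite normr_id.
  near=> M; rewrite normr_ge0 horner_series_trunc_remainder_le ?ltW //.
  by near: M; exact: nbhs_infty_ge.
have -> : (fun M => G.[z] * (series_trunc c M).[z]) =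
          (fun M => U.[z] + (G * series_trunc c M - U).[z]).
  by apply: funext => M; rewrite hornerD hornerN -hornerM addrC subrK.
by apply: cvg_trans (cvgD (cvg_cst U.[z]) remainder_cvg0) _; rewrite addr0.
Unshelve. all: end_near.
Qed.

Lemma horner_polyconv_ge0 (G U : {poly R}) (c : nat -> R) z :
  (forall n, 0 <= c n) -> polyconv G c =1 nth 0 U -> polynomially_bounded c ->
  0 <= z < 1 -> 0 <= G.[z] -> 0 <= U.[z].
Proof.
move=> c_ge0 GcU c_bdd /andP[z_ge0 z_lt1] Gz_ge0.
apply: (cvgr_to_ge (horner_series_trunc_cvg GcU c_bdd _)); first by rewrite ger0_norm.
apply: nearW => M; rewrite mulr_ge0 // horner_poly.
by apply: sumr_ge0 => i _; rewrite mulr_ge0 ?exprn_ge0.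
Qed.

End PowerSeriesAtPoint.

Lemma dvdp_1subXn_mul (R : idomainType) N n :
  (1 - 'X^N : {poly R}) %| 1 - 'X^(N * n).
Proof.
have -> : 1 - 'X^(N * n) = - (('X^N) ^+ n - 1) :> {poly R} by rewrite exprM opprB.
by rewrite dvdpNr subrX1 dvdp_mulr // -(opprB 1) dvdpNr.
Qed.

Lemma dvdp_mul_1subXn_exp (F : closedFieldType) (p q : {poly F}) :
  p != 0 -> q != 0 ->
  (forall w, (mup w p < mup w q)%N -> exists2 n, (0 < n)%N & w ^+ n = 1) ->
  exists N K, (0 < N)%N /\ q %| p * (1 - 'X^N) ^+ K.
Proof.
move=> + + poles; have [s] := ubnP (size q).
elim: s p q poles => // s IH p q poles sq p0 q0.
have [/eqP q_const|/closed_rootP[w qw]] := eqVneq (size q) 1%N.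
  by exists 1%N, 0%N; rewrite (eqp_dvdl _ (_ : q %= 1)) ?dvd1p // -size_poly_eq1.
have [q' Dq] := factor_theorem _ _ qw.
have Xw0 : 'X - w%:P != 0 by rewrite polyXsubC_eq0.
have q'0 : q' != 0 by apply: contraNneq q0 => q'0; rewrite Dq q'0 mul0r.
have sq' : (size q' < s)%N.
  by move: sq; rewrite Dq size_Mmonic ?monicXsubC // size_XsubC addn2.
have mup_Xw w' : mup w' ('X - w%:P) = (w == w').
  by have := mup_XsubCX 1 w' w; rewrite expr1.
have [/factor_theorem[p' Dp]|pw] := boolP (root p w).
  have p'0 : p' != 0 by apply: contraNneq p0 => p'0; rewrite Dp p'0 mul0r.
  have [N [K [N_gt0 dvd]]] : exists N K, (0 < N)%N /\ q' %| p' * (1 - 'X^N) ^+ K.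
    apply: IH => // w' lt; apply: poles.
    by rewrite Dp Dq !mupM // mup_Xw ltn_add2r.
  by exists N, K; rewrite Dq Dp mulrAC dvdp_mul.
have [n n_gt0 wn] : exists2 n, (0 < n)%N & w ^+ n = 1.
  by apply: poles; rewrite mupNroot // Dq mupM // mup_Xw eqxx addn1.
have [N [K [N_gt0 dvd]]] : exists N K, (0 < N)%N /\ q' %| p * (1 - 'X^N) ^+ K.
  apply: IH => // w' lt; apply: poles.
  by rewrite Dq mupM // (leq_trans lt) // leq_addr.
exists (N * n)%N, K.+1; split; first by rewrite muln_gt0 N_gt0.
rewrite Dq exprSr mulrA; apply: dvdp_mul.
  by apply: (dvdp_trans dvd); rewrite dvdp_mul2l // dvdp_exp2r // dvdp_1subXn_mul.
by rewrite dvdp_XsubCl /root !hornerE mulnC exprM wn expr1n subrr.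
Qed.

Section RealRationalFunctions.
Variable R : realType.
Local Notation CR := (complex.complex R).
Implicit Types (p q : {poly R}).

Lemma mup_toC_1 p p1 m : ~~ root p1 1 -> p = p1 * ('X - 1%:P) ^+ m ->
  mup (1 : CR) (toC p) = m.
Proof.
move=> p1_1 ->; rewrite /toC rmorphM rmorphXn /= map_polyXsubC rmorph1 mupMr.
  by rewrite mup_XsubCX eqxx.
by rewrite -(rmorph1 (complex.real_complex_def (Phant R))) fmorph_root.
Qed.

Lemma P1_dvdp_1subXn p q : q != 0 -> P1 p q ->
  exists N K, (0 < N)%N /\ q %| p * (1 - 'X^N) ^+ K.
Proof.
have [->|p0] := eqVneq p 0; first by exists 1%N, 0%N; rewrite mul0r dvdp0.
move=> q0 P1pq; have [|||N [K [N_gt0 dvd]]] := @dvdp_mul_1subXn_exp _ (toC p) (toC q).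
- by rewrite map_poly_eq0.
- by rewrite map_poly_eq0.
- by move=> w lt; apply: P1pq; rewrite /pole_order (negbTE p0) subn_gt0.
exists N, K; split => //.
rewrite -(dvdp_map (complex.real_complex_def (Phant R))) -/(toC _) -/(toC _).
by rewrite /toC rmorphM rmorphXn rmorphB rmorph1 /= map_polyXn.
Qed.

Lemma P1_common_multiple (pa qa pb qb : {poly R}) : qa != 0 -> qb != 0 ->
  P1 pa qa -> P1 pb qb -> exists N K, [/\ (0 < N)%N,
    qa %| pa * (1 - 'X^N) ^+ K & qb %| pb * (1 - 'X^N) ^+ K].
Proof.
move=> qa0 qb0 /(P1_dvdp_1subXn qa0)[Na [Ka [Na_gt0 dvd_a]]].
move=> /(P1_dvdp_1subXn qb0)[Nb [Kb [Nb_gt0 dvd_b]]].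
have dvd_common N K N' K' :
    ((1 - 'X^N) ^+ K : {poly R}) %| (1 - 'X^(N * N')) ^+ (K + K').
  by rewrite exprD dvdp_mulr // dvdp_exp2r // dvdp_1subXn_mul.
exists (Na * Nb)%N, (Ka + Kb)%N; split; first by rewrite muln_gt0 Na_gt0.
  by apply: (dvdp_trans dvd_a); apply: dvdp_mul.
by apply: (dvdp_trans dvd_b); rewrite mulnC addnC; apply: dvdp_mul.
Qed.

Lemma P2_neq0 m p q : (0 < m)%N -> P2 m p q -> p != 0.
Proof.
by move=> m_gt0; rewrite /P2 /pole_order; case: eqP => // _ m0; rewrite -m0 in m_gt0.
Qed.

Lemma near_horner_neq0 q (x : R) : q != 0 -> \forall z \near x^', q.[z] != 0.
Proof.
move=> q0; have [m [q1 /implyP/(_ q0) q1x ->]] := multiplicity_XsubC q x.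
have q1_near : \forall z \near x, q1.[z] != 0.
  exact: cvgr_neq0 (@continuous_horner _ q1 x) q1x.
rewrite near_withinE; near=> z => zx.
rewrite hornerM horner_exp hornerXsubC mulf_neq0 ?expf_neq0 ?subr_eq0 //.
by near: z.
Unshelve. all: end_near.
Qed.

(* [0 < d] is what recovers [mup 1 q = mup 1 p + d] from the truncated
   subtraction in [pole_order]. *)
Lemma P2_cvg d p q : (0 < d)%N -> p != 0 -> q != 0 -> P2 d p q ->
  cvg ((fun z => p.[z] / q.[z] * (1 - z) ^+ d) @ (1 : R)^').
Proof.
move=> d_gt0 p0 q0 P2pq.
have [mp [p1 /implyP/(_ p0) p1_1 Dp]] := multiplicity_XsubC p 1.
have [mq [q1 /implyP/(_ q0) q1_1 Dq]] := multiplicity_XsubC q 1.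
have Emq : mq = (mp + d)%N.
  move: P2pq; rewrite /P2 /pole_order (negbTE p0).
  by rewrite (mup_toC_1 p1_1 Dp) (mup_toC_1 q1_1 Dq); lia.
pose g z := (-1) ^+ d * (p1.[z] / q1.[z]).
have g_cont : g @ (1 : R) --> g 1.
  apply: cvgM; first exact: cvg_cst.
  exact: cvgM (@continuous_horner _ p1 1) (cvgV q1_1 (@continuous_horner _ q1 1)).
apply/cvg_ex; exists (g 1); apply: cvg_trans (cvg_within_filter _ g_cont).
apply: near_eq_cvg; rewrite near_withinE; apply: nearW => z /= z1.
rewrite /g Dp Dq Emq !hornerM !horner_exp !hornerXsubC exprD.
rewrite -[1 - z]opprB (exprNn (z - 1)).
have [->|q1z] := eqVneq q1.[z] 0; first by rewrite !(mul0r, invr0, mulr0).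
by field; rewrite q1z !expf_neq0 // subr_eq0.
Qed.

End RealRationalFunctions.

Section ComparisonNearOne.
Variable R : realType.
Implicit Types (pa qa pb qb : {poly R}) (a b : nat -> R).

Lemma rat_series_neq0 pa qa a : is_rat_series pa qa a -> qa != 0.
Proof. by move=> [qa0 _]; apply: contraNneq qa0 => ->; rewrite horner0. Qed.

Lemma rat_series_horner_le pa qa pb qb a b z :
  is_rat_series pa qa a -> is_rat_series pb qb b -> P1 pa qa -> P1 pb qb ->
  (forall n, \sum_(i < n.+1) a i <= \sum_(i < n.+1) b i) ->
  0 < z < 1 -> qa.[z] != 0 -> qb.[z] != 0 -> pa.[z] / qa.[z] <= pb.[z] / qb.[z].
Proof.
move=> ra rb P1a P1b ab /andP[z_gt0 z_lt1] qaz qbz.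
have [N [K [N_gt0 dvd_a dvd_b]]] :=
  P1_common_multiple (rat_series_neq0 ra) (rat_series_neq0 rb) P1a P1b.
set H : {poly R} := (1 - 'X^N) ^+ K; set U := pb * H %/ qb - pa * H %/ qa.
pose c n := \sum_(i < n.+1) (b i - a i).
have cU : polyconv (H * (1 - 'X)) c =1 nth 0 U.
  move=> n; rewrite polyconvM.
  rewrite (eq_polyconv _ (polyconv_partial_sums (fun i => b i - a i))) polyconvB.
  by rewrite (rat_series_polyconv rb dvd_b) (rat_series_polyconv ra dvd_a) coefB.
have c_bdd : polynomially_bounded c.
  apply: (@polynomially_bounded_1subXn _ 1%N) => //.
  apply: (polynomially_bounded_1subXn_exp (K := K) N_gt0).
  apply: eq_polynomially_bounded (polynomially_bounded_coef U) => n.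
  by rewrite -cU polyconvM expr1.
have Hz_gt0 : 0 < H.[z].
  by rewrite horner_exp !hornerE exprn_gt0 // subr_gt0 exprn_ilt1 ?ltW // -lt0n.
have U_ge0 : 0 <= U.[z].
  apply: (horner_polyconv_ge0 _ cU c_bdd); first by move=> n; rewrite /c sumrB subr_ge0.
    by rewrite ltW.
  by rewrite hornerM mulr_ge0 ?(ltW Hz_gt0) // !hornerE subr_ge0 ltW.
have ratioE p q : q %| p * H -> q.[z] != 0 -> p.[z] / q.[z] = (p * H %/ q).[z] / H.[z].
  move=> dvd qz; apply/eqP; rewrite eqr_div ?(gt_eqF Hz_gt0) //; apply/eqP.
  by rewrite -!hornerM divpK.
rewrite (ratioE _ _ dvd_a qaz) (ratioE _ _ dvd_b qbz) -subr_ge0 -mulrBl.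
rewrite divr_ge0 ?(ltW Hz_gt0) //.
by rewrite /U hornerD hornerN in U_ge0.
Qed.

Lemma rat_series_le_at_left pa qa pb qb a b :
  is_rat_series pa qa a -> is_rat_series pb qb b -> P1 pa qa -> P1 pb qb ->
  (forall n, \sum_(i < n.+1) a i <= \sum_(i < n.+1) b i) ->
  \forall z \near (1 : R)^'-, pa.[z] / qa.[z] <= pb.[z] / qb.[z].
Proof.
move=> ra rb P1a P1b ab.
have left_of_dnbhs (P : R -> Prop) :
    (\forall z \near (1 : R)^', P z) -> \forall z \near (1 : R)^'-, P z.
  by apply: within_subset => r /lt_eqF/negbT.
near=> z; apply: (rat_series_horner_le ra rb) => //.
- by apply/andP; split; near: z; [exact: nbhs_left_gt | exact: nbhs_left_lt].
- by near: z; apply: left_of_dnbhs; exact: near_horner_neq0 (rat_series_neq0 ra).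
- by near: z; apply: left_of_dnbhs; exact: near_horner_neq0 (rat_series_neq0 rb).
Unshelve. all: end_near.
Qed.

End ComparisonNearOne.

Theorem lemma4p4 (R : realType) (d : nat) (pa qa pb qb : {poly R}) (a b : nat -> R) :
  (0 < d)%N ->
  is_rat_series pa qa a -> is_rat_series pb qb b ->
  P1 pa qa -> P2 d pa qa -> P3 d.+1 pa qa ->
  P1 pb qb -> P2 d pb qb -> P3 d.+1 pb qb ->
  (* a(z)/(1-z) <= b(z)/(1-z) coefficientwise: partial sums *)
  (forall n : nat, \sum_(i < n.+1) a i <= \sum_(i < n.+1) b i) ->
  lim ((fun z : R => pa.[z] / qa.[z] * (1 - z) ^+ d) @ (1 : R)^') <=
  lim ((fun z : R => pb.[z] / qb.[z] * (1 - z) ^+ d) @ (1 : R)^').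
Proof.
move=> d_gt0 ra rb P1a P2a _ P1b P2b _ ab.
have cva := P2_cvg d_gt0 (P2_neq0 d_gt0 P2a) (rat_series_neq0 ra) P2a.
have cvb := P2_cvg d_gt0 (P2_neq0 d_gt0 P2b) (rat_series_neq0 rb) P2b.
apply: (ler_cvg_to (cvg_dnbhs_at_left cva) (cvg_dnbhs_at_left cvb)).
near=> z; apply: ler_wpM2r.
- by rewrite exprn_ge0 // subr_ge0; near: z; exact: nbhs_left_le.
- by near: z; exact: rat_series_le_at_left ra rb P1a P1b ab.
Unshelve. all: end_near.
Qed.
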